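(* A (connected) set Hopf monoid $(\mathbf{H},m,\Delta)$ is self-adjoint with respect to some poset structure if and only if it is commutative and cocommutative.
   Context: A (connected) set species $\mathbf{H}$ assigns to each finite set $I$ a finite set $\mathbf{H}[I]$, $\mathbf{H}[\emptyset]=\{1\}$, and to each bijection a bijection, functorially. A set Hopf monoid has maps $m_{S,T}:\mathbf{H}[S]\times\mathbf{H}[T]\to\mathbf{H}[S\sqcup T]$ (natural, associative, unital) and $\Delta_{S,T}:\mathbf{H}[S\sqcup T]\to\mathbf{H}[S]\times\mathbf{H}[T]$ (natural, coassociative, counital), satisfying compatibility: for $I=S_1\sqcup S_2=T_1\sqcup T_2$, $A=S_1\cap T_1$, $B=S_1\cap T_2$, $C=S_2\cap T_1$, $D=S_2\cap T_2$, if $\Delta_{A,B}(x)=(x_A,x_B)$, $\Delta_{C,D}(y)=(y_C,y_D)$ then $\Delta_{T_1,T_2}(m_{S_1,S_2}(x,y))=(m_{A,C}(x_A,y_C),m_{B,D}(x_B,y_D))$. Commutative: $m_{S,T}(x,y)=m_{T,S}(y,x)$; cocommutative: $\Delta_{S,T}(x)=(y,z)\iff\Delta_{T,S}(x)=(z,y)$. ''Self-adjoint with respect to some poset structure'' means there exist partial orders on the sets $\mathbf{H}[I]$ such that all relabelling bijections, all $m_{S,T}$ and all $\Delta_{S,T}$ are order-preserving (product orders on products), and for all $S,T$ the maps $m_{S,T}$ and $\Delta_{S,T}$ form a Galois connection (either $\Delta_{S,T}(x)\le(y,z)\iff x\le m_{S,T}(y,z)$ for all $x,y,z$, or $m_{S,T}(y,z)\le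 x\iff(y,z)\le\Delta_{S,T}(x)$ for all $x,y,z$). *)

From HB Require Import structures.
From mathcomp Require Import all_boot.
From mathcomp Require Import finmap.
Set Implicit Arguments. Unset Strict Implicit. Unset Printing Implicit Defensive.
Local Open Scope fset_scope.

(* Labels are natural numbers; the finite sets I
   are the finite subsets {fset nat}.  A set species H is presented in
   "fibered" form: a carrier X (the disjoint union of all H[I]) with a
   support map supp : X -> {fset nat}, so that H[I] = {x | supp x = I}.
   A bijection I -> J is a map s : nat -> nat injective on I with image J;
   relab s x is H[s](x).  mul x y is m_{supp x, supp y}(x,y) and
   comul S T x is Delta_{S,T}(x); values outside the intended domains are
   junk and never constrained. *)

Definition disj (S T : {fset nat}) : bool := S `&` T == fset0.

Definition img (s : nat -> nat) (I : {fset nat}) : {fset nat} :=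
  [fset s i | i in I].

Section Hopf.
Variables (X : Type) (supp : X -> {fset nat}) (one : X)
  (mul : X -> X -> X) (comul : {fset nat} -> {fset nat} -> X -> X * X)
  (relab : (nat -> nat) -> X -> X).

Definition is_connected_set_species : Prop :=
  ((forall I : {fset nat}, exists (n : nat) (f : 'I_n -> X),
        forall x, supp x = I -> exists i, f i = x) /\
   (supp one = fset0) /\
   ((forall x, supp x = fset0 -> x = one)) /\
   ((forall s x, {in supp x &, injective s} ->
         supp (relab s x) = img s (supp x))) /\
   ((forall s t x, {in supp x, s =1 t} -> relab s x = relab t x)) /\
   ((forall x, relab (fun i => i) x = x)) /\
   ((forall s t x, {in supp x &, injective s} ->
         {in img s (supp x) &, injective t} ->
         relab t (relab s x) = relab (t \o s) x))).

Definition is_set_monoid : Prop :=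
  (((forall x y, disj (supp x) (supp y) ->
         supp (mul x y) = supp x `|` supp y)) /\
   ((forall s x y, disj (supp x) (supp y) ->
         {in supp x `|` supp y &, injective s} ->
         relab s (mul x y) = mul (relab s x) (relab s y))) /\
   ((forall x y z, disj (supp x) (supp y) -> disj (supp x) (supp z) ->
         disj (supp y) (supp z) ->
         mul (mul x y) z = mul x (mul y z))) /\
   ((forall x, mul one x = x /\ mul x one = x))).

Definition is_set_comonoid : Prop :=
  (((forall S T x, disj S T -> supp x = S `|` T ->
         supp (comul S T x).1 = S /\ supp (comul S T x).2 = T)) /\
   ((forall s S T x, disj S T -> supp x = S `|` T ->
         {in S `|` T &, injective s} ->
         comul (img s S) (img s T) (relab s x)
           = (relab s (comul S T x).1, relab s (comul S T x).2))) /\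
   ((forall S T U x, disj S T -> disj S U -> disj T U ->
         supp x = S `|` T `|` U ->
         let: (x1, x23) := comul S (T `|` U) x in
         let: (x12, x3) := comul (S `|` T) U x in
         [/\ (comul S T x12).1 = x1, (comul S T x12).2 = (comul T U x23).1
           & x3 = (comul T U x23).2])) /\
   ((forall x, (comul fset0 (supp x) x).2 = x /\
                 (comul (supp x) fset0 x).1 = x))).

Definition hopf_compatible : Prop :=
  forall (S1 S2 T1 T2 : {fset nat}) x y,
    disj S1 S2 -> disj T1 T2 -> S1 `|` S2 = T1 `|` T2 ->
    supp x = S1 -> supp y = S2 ->
    let A := S1 `&` T1 in let B := S1 `&` T2 in
    let C := S2 `&` T1 in let D := S2 `&` T2 in
    comul T1 T2 (mul x y)
      = (mul (comul A B x).1 (comul C D y).1,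
         mul (comul A B x).2 (comul C D y).2).

Definition is_connected_set_hopf_monoid : Prop :=
  ((is_connected_set_species) /\
   (is_set_monoid) /\
   (is_set_comonoid) /\
   (hopf_compatible)).

Definition commutative_hm : Prop :=
  forall x y, disj (supp x) (supp y) -> mul x y = mul y x.

Definition cocommutative_hm : Prop :=
  forall S T x, disj S T -> supp x = S `|` T ->
    comul T S x = ((comul S T x).2, (comul S T x).1).

(* le restricted to each fiber H[I] is the partial order on H[I];
   comparisons between different fibers are irrelevant. *)
Definition self_adjoint_wrt (le : X -> X -> Prop) : Prop :=
  (((forall x, le x x)) /\
   ((forall x y, supp x = supp y -> le x y -> le y x -> x = y)) /\
   ((forall x y z, supp x = supp y -> supp y = supp z ->
         le x y -> le y z -> le x z)) /\
   ((forall s x y, supp x = supp y -> {in supp x &, injective s} ->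
         le x y -> le (relab s x) (relab s y))) /\
   ((forall x x' y y', disj (supp x) (supp y) ->
         supp x = supp x' -> supp y = supp y' ->
         le x x' -> le y y' -> le (mul x y) (mul x' y'))) /\
   ((forall S T x x', disj S T -> supp x = S `|` T -> supp x' = S `|` T ->
         le x x' -> le (comul S T x).1 (comul S T x').1 /\
                    le (comul S T x).2 (comul S T x').2)) /\
   ((forall S T, disj S T ->
         (forall x y z, supp x = S `|` T -> supp y = S -> supp z = T ->
            (le (comul S T x).1 y /\ le (comul S T x).2 z <-> le x (mul y z)))
         \/
         (forall x y z, supp x = S `|` T -> supp y = S -> supp z = T ->
            (le (mul y z) x <-> le y (comul S T x).1 /\ le z (comul S T x).2))))).

Definition self_adjoint_some_poset : Prop :=
  exists le : X -> X -> Prop, self_adjoint_wrt le.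

End Hopf.

From mathcomp Require Import all_boot.
From mathcomp Require Import finmap.
From Stdlib Require Import Relation_Operators Operators_Properties.
Set Implicit Arguments. Unset Strict Implicit. Unset Printing Implicit Defensive.
Local Open Scope fset_scope.

(* Write mD_{S,T} for m_{S,T} o Delta_{S,T}, an idempotent map on H[S + T].
   If H is commutative and cocommutative, mD_{S,T} x = m(x|S, x|T) and the maps mD
   commute with each other, with relabellings, products and restrictions; the
   reflexive-transitive closure of the steps x -> mD_{S,T} x is then a partial order
   for which Delta_{S,T} x <= (y, z) <-> x <= m(y, z).
   Conversely, a Galois connection between m_{S,T} and Delta_{S,T} makes mD_{S,T}
   inflationary or deflationary. If mD_{S,T} and mD_{T,S} go the same way,
   antisymmetry gives commutativity and cocommutativity on S + T at once. In the mixed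
   case, relabel along the transposition of some a in S and b in T: by induction on
   |S + T| all proper pieces of x are commutative and cocommutative, which gives
   mD_{S',T'} mD_{S,T} = mD_{T',S'} mD_{T,S} for S' = S - a + b, T' = T - b + a, and
   the resulting cycle of inequalities forces mD_{S,T} x = x. *)

Lemma disj_mem (S T : {fset nat}) i : disj S T -> (i \in S) && (i \in T) = false.
Proof. by move=> /eqP /(congr1 (fun Z => i \in Z)); rewrite !inE. Qed.

Lemma disj_memI (S T : {fset nat}) : (forall i, (i \in S) && (i \in T) = false) -> disj S T.
Proof. by move=> H; apply/eqP/fsetP=> i; rewrite !inE H. Qed.

Lemma fsubset_mem (A B : {fset nat}) i : A `<=` B -> (i \in A) ==> (i \in B).
Proof. by move=> /fsubsetP AB; apply/implyP=> /AB. Qed.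

Lemma fcard_lt (I J : {fset nat}) c : J `<=` I -> c \in I -> c \notin J ->
  #|` J| < #|` I|.
Proof.
move=> sJI cI cJ; apply: fproper_ltn_card; rewrite fproperE sJI /=.
by apply: contra cJ => /fsubsetP; apply.
Qed.

(* [fset_solve] decides the Boolean identities between finite label sets used below:
   it instantiates every set hypothesis at a generic label and then splits on all
   memberships and equalities of labels. *)
Ltac fset_inst i := repeat match goal with
  | H : is_true (disj _ _) |- _ => move: (disj_mem i H); clear H
  | H : is_true (fsubset _ _) |- _ => move: (fsubset_mem i H); clear H
  | H : ?A = _ |- _ => let T := type of A in lazymatch T with {fset _} =>
      move: (congr1 (fun Z => i \in Z) H); clear H end
  | H : is_true _ |- _ => move: H
  end.

Ltac fset_neq := repeat match goal with
  | H : (?x == ?x) = false |- _ => by rewrite eqxx in H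
  | H : (?x == ?y) = false |- context [?x == ?y] => rewrite H
  | H : (?x == ?y) = false |- context [?y == ?x] => rewrite (eq_sym y x) H
  end.

Ltac fset_cases := rewrite ?eqxx /=; fset_neq; rewrite /=; try done; first
  [ match goal with |- context [?x == ?y] =>
      is_var x; is_var y; progress case: (eqVneq x y) => [?|/negbTE ?]; [subst x|] end
  | match goal with |- context [?x \in ?A] => progress case: (x \in A) end ];
  match goal with _ => fset_cases end.

Ltac fset_solve := let i := fresh "i" in match goal with
  | |- is_true (disj _ _) => apply/disj_memI => i; fset_inst i; rewrite ?inE /=; fset_cases
  | |- ?A = _ => let T := type of A in lazymatch T with {fset _} => idtac end;
      apply/fsetP => i; fset_inst i; rewrite ?inE /=; fset_cases
  | |- is_true (fsubset _ _) => apply/fsubsetP => i; fset_inst i; rewrite ?inE /=; fset_cases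
  | |- is_true (~~ (?c == _)) => fset_inst c; rewrite ?inE /=; fset_cases
  | |- is_true (~~ (?c \in _)) => fset_inst c; rewrite ?inE /=; fset_cases
  | |- is_true (?c \in _) => fset_inst c; rewrite ?inE /=; fset_cases
  end.


Section SetHopfMonoid.
Variables (X : Type) (supp : X -> {fset nat}) (one : X)
  (mul : X -> X -> X) (comul : {fset nat} -> {fset nat} -> X -> X * X)
  (relab : (nat -> nat) -> X -> X).

Hypothesis supp0_one : forall x, supp x = fset0 -> x = one.
Hypothesis supp_relab : forall s x, {in supp x &, injective s} ->
  supp (relab s x) = img s (supp x).
Hypothesis eq_relab : forall s t x, {in supp x, s =1 t} -> relab s x = relab t x.
Hypothesis relab_id : forall x, relab id x = x.
Hypothesis relab_comp : forall s t x, {in supp x &, injective s} ->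
  {in img s (supp x) &, injective t} -> relab t (relab s x) = relab (t \o s) x.
Hypothesis supp_mul : forall x y, disj (supp x) (supp y) ->
  supp (mul x y) = supp x `|` supp y.
Hypothesis relab_mul : forall s x y, disj (supp x) (supp y) ->
  {in supp x `|` supp y &, injective s} ->
  relab s (mul x y) = mul (relab s x) (relab s y).
Hypothesis mulA : forall x y z, disj (supp x) (supp y) -> disj (supp x) (supp z) ->
  disj (supp y) (supp z) -> mul (mul x y) z = mul x (mul y z).
Hypothesis mul_unit : forall x, mul one x = x /\ mul x one = x.
Hypothesis supp_comul : forall S T x, disj S T -> supp x = S `|` T ->
  supp (comul S T x).1 = S /\ supp (comul S T x).2 = T.
Hypothesis comul_relab : forall s S T x, disj S T -> supp x = S `|` T ->
  {in S `|` T &, injective s} ->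
  comul (img s S) (img s T) (relab s x)
  = (relab s (comul S T x).1, relab s (comul S T x).2).
Hypothesis comulA : forall S T U x, disj S T -> disj S U -> disj T U ->
  supp x = S `|` T `|` U ->
  let: (x1, x23) := comul S (T `|` U) x in
  let: (x12, x3) := comul (S `|` T) U x in
  [/\ (comul S T x12).1 = x1, (comul S T x12).2 = (comul T U x23).1
    & x3 = (comul T U x23).2].
Hypothesis comul_unit : forall x,
  (comul fset0 (supp x) x).2 = x /\ (comul (supp x) fset0 x).1 = x.
Hypothesis compat : hopf_compatible supp mul comul.

Lemma mul1m x : mul one x = x. Proof. by case: (mul_unit x). Qed.
Lemma mulm1 x : mul x one = x. Proof. by case: (mul_unit x). Qed.

Lemma supp_comul1 S T x : disj S T -> supp x = S `|` T -> supp (comul S T x).1 = S.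
Proof. by move=> dST sx; case: (supp_comul dST sx). Qed.

Lemma supp_comul2 S T x : disj S T -> supp x = S `|` T -> supp (comul S T x).2 = T.
Proof. by move=> dST sx; case: (supp_comul dST sx). Qed.

Lemma comul0l S x : supp x = S -> comul fset0 S x = (one, x).
Proof.
move=> <-; case: (comul_unit x) => unit2 _; rewrite [LHS]surjective_pairing unit2.
by congr pair; apply: supp0_one; apply: supp_comul1; fset_solve.
Qed.

Lemma comul0r S x : supp x = S -> comul S fset0 x = (x, one).
Proof.
move=> <-; case: (comul_unit x) => _ unit1; rewrite [LHS]surjective_pairing unit1.
by congr pair; apply: supp0_one; apply: supp_comul2; fset_solve.
Qed.

Lemma comul_mul S T y z : disj S T -> supp y = S -> supp z = T ->
  comul S T (mul y z) = (y, z).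
Proof.
move=> dST sy sz; subst S T; rewrite (compat dST dST erefl erefl erefl) /=.
have -> : supp y `&` supp y = supp y by fset_solve.
have -> : supp y `&` supp z = fset0 by fset_solve.
have -> : supp z `&` supp y = fset0 by fset_solve.
have -> : supp z `&` supp z = supp z by fset_solve.
by rewrite comul0r // comul0l //= mulm1 mul1m.
Qed.

Lemma comul_mulC S T y z : disj S T -> supp y = S -> supp z = T ->
  comul T S (mul y z) = (z, y).
Proof.
move=> dST sy sz; subst S T; have dTS : disj (supp z) (supp y) by fset_solve.
rewrite (compat dST dTS (fsetUC _ _) erefl erefl) /=.
have -> : supp y `&` supp z = fset0 by fset_solve.
have -> : supp y `&` supp y = supp y by fset_solve.
have -> : supp z `&` supp z = supp z by fset_solve.
have -> : supp z `&` supp y = fset0 by fset_solve.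
by rewrite comul0l // comul0r //= mulm1 mul1m.
Qed.

Definition mulcomul S T x := mul (comul S T x).1 (comul S T x).2.

Definition res A x := (comul A (supp x `\` A) x).1.

Definition piece P A Q x := (comul A Q (comul P (A `|` Q) x).2).1.

Lemma supp_mulcomul S T x : disj S T -> supp x = S `|` T ->
  supp (mulcomul S T x) = S `|` T.
Proof.
by move=> dST sx; rewrite supp_mul (supp_comul1 dST sx) ?(supp_comul2 dST sx).
Qed.

Lemma mulcomulK S T x : disj S T -> supp x = S `|` T ->
  mulcomul S T (mulcomul S T x) = mulcomul S T x.
Proof.
move=> dST sx.
by rewrite {1}/mulcomul comul_mul // ?(supp_comul1 dST sx) ?(supp_comul2 dST sx).
Qed.

Lemma relab_mulcomul s S T x : disj S T -> supp x = S `|` T ->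
  {in S `|` T &, injective s} ->
  relab s (mulcomul S T x) = mulcomul (img s S) (img s T) (relab s x).
Proof.
move=> dST sx inj; rewrite /mulcomul comul_relab //= relab_mul //;
  by rewrite (supp_comul1 dST sx) (supp_comul2 dST sx).
Qed.

Lemma comul_comul1 A B C x : disj A B -> disj A C -> disj B C ->
  supp x = A `|` B `|` C ->
  comul A B (comul (A `|` B) C x).1 = (piece fset0 A (B `|` C) x, piece A B C x).
Proof.
move=> dAB dAC dBC sx; have := comulA dAB dAC dBC sx.
rewrite /piece comul0l; last by rewrite fsetUA.
case: (comul A (B `|` C) x) => x1 x23; case: (comul (A `|` B) C x) => x12 x3 /=.
by case=> <- <- _; rewrite -surjective_pairing.
Qed.

Lemma comul_comul2 A B C x : disj A B -> disj A C -> disj B C ->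
  supp x = A `|` B `|` C ->
  comul B C (comul A (B `|` C) x).2 = (piece A B C x, piece (A `|` B) C fset0 x).
Proof.
move=> dAB dAC dBC sx.
have dABC : disj (A `|` B) C by fset_solve.
rewrite /piece fsetU0 comul0r; last exact: supp_comul2 dABC sx.
have := comulA dAB dAC dBC sx.
case: (comul A (B `|` C) x) => x1 x23; case: (comul (A `|` B) C x) => x12 x3 /=.
by case=> _ _ ->; rewrite -surjective_pairing.
Qed.

Lemma piece0 A Q x : disj A Q -> supp x = A `|` Q -> piece fset0 A Q x = res A x.
Proof.
move=> dAQ sx; rewrite /piece /res comul0l //.
by have -> : supp x `\` A = Q by rewrite sx; fset_solve.
Qed.

Lemma supp_res A x : A `<=` supp x -> supp (res A x) = A.
Proof. by move=> sA; apply: supp_comul1; fset_solve. Qed.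

Lemma res_res A B x : A `<=` B -> B `<=` supp x -> res A (res B x) = res A x.
Proof.
move=> sAB sB; set C := supp x `\` B.
have sx : supp x = A `|` (B `\` A) `|` C by rewrite /C; fset_solve.
have eB : A `|` (B `\` A) = B by fset_solve.
have -> : res A (res B x) = (comul A (B `\` A) (comul (A `|` (B `\` A)) C x).1).1.
  by rewrite {1}/res (supp_res sB) eB.
by rewrite comul_comul1 // ?piece0 //; rewrite /C; fset_solve.
Qed.

Lemma mulcomul_mulcomul S1 S2 T1 T2 x :
  disj S1 S2 -> disj S1 T1 -> disj S1 T2 -> disj S2 T1 -> disj S2 T2 -> disj T1 T2 ->
  supp x = (S1 `|` S2) `|` (T1 `|` T2) ->
  mulcomul (S1 `|` T1) (S2 `|` T2) (mulcomul (S1 `|` S2) (T1 `|` T2) x)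
  = mul (mul (piece fset0 S1 (S2 `|` (T1 `|` T2)) x) (piece (S1 `|` S2) T1 T2 x))
        (mul (piece S1 S2 (T1 `|` T2) x) (piece (S1 `|` S2 `|` T1) T2 fset0 x)).
Proof.
move=> d12 dS1T1 dS1T2 dS2T1 dS2T2 dT12 sx.
have dST : disj (S1 `|` S2) (T1 `|` T2) by fset_solve.
have dST' : disj (S1 `|` T1) (S2 `|` T2) by fset_solve.
have eU : (S1 `|` S2) `|` (T1 `|` T2) = (S1 `|` T1) `|` (S2 `|` T2) by fset_solve.
rewrite /mulcomul (compat dST dST' eU (supp_comul1 dST sx) (supp_comul2 dST sx)) /=.
have -> : (S1 `|` S2) `&` (S1 `|` T1) = S1 by fset_solve.
have -> : (S1 `|` S2) `&` (S2 `|` T2) = S2 by fset_solve.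
have -> : (T1 `|` T2) `&` (S1 `|` T1) = T1 by fset_solve.
have -> : (T1 `|` T2) `&` (S2 `|` T2) = T2 by fset_solve.
rewrite comul_comul1 ?comul_comul2 //.
all: fset_solve.
Qed.

Definition comm_cocomm_at S T :=
  (forall y z, supp y = S -> supp z = T -> mul y z = mul z y) /\
  (forall x, supp x = S `|` T -> comul T S x = ((comul S T x).2, (comul S T x).1)).

Definition comm_cocomm_below n :=
  forall S T, disj S T -> #|` S `|` T| < n -> comm_cocomm_at S T.

Lemma comm_cocomm_atC S T : comm_cocomm_at S T -> comm_cocomm_at T S.
Proof.
case=> cST ccST; split=> [y z sy sz|x sx]; first by rewrite (cST z y).
by rewrite ccST -?surjective_pairing // sx fsetUC.
Qed.

Lemma comm_cocomm_at0 T : comm_cocomm_at fset0 T.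
Proof.
split=> [y z /supp0_one -> _|x sx]; first by rewrite mul1m mulm1.
by rewrite !(comul0l, comul0r) // sx fset0U.
Qed.

Lemma comm_cocomm_at_fixed S T : disj S T ->
  (forall x, supp x = S `|` T -> mulcomul S T x = x) -> comm_cocomm_at S T.
Proof.
move=> dST fixed; split=> [y z sy sz|x sx].
  have dTS : disj T S by fset_solve.
  have szy : supp (mul z y) = S `|` T by rewrite supp_mul; rewrite ?sz ?sy 1?fsetUC.
  by rewrite -[RHS](fixed _ szy) /mulcomul (comul_mulC dTS).
rewrite -{1}(fixed x sx) /mulcomul comul_mulC //.
  exact: supp_comul1.
exact: supp_comul2.
Qed.

Section BelowInduction.
Variable n : nat.
Hypothesis IH : comm_cocomm_below n.

Lemma mulC_lt y z : disj (supp y) (supp z) -> #|` supp y `|` supp z| < n ->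
  mul y z = mul z y.
Proof. by move=> dyz lt; case: (IH dyz lt) => comm _; apply: comm. Qed.

Section Pieces.
Variables (P A Q : {fset nat}) (x : X).
Hypotheses (dPA : disj P A) (dPQ : disj P Q) (dAQ : disj A Q).
Hypothesis sx : supp x = P `|` A `|` Q.

Lemma piece_swap_front : #|` P `|` A| < n -> piece P A Q x = piece fset0 A (P `|` Q) x.
Proof.
move=> lt; set y := (comul (P `|` A) Q x).1.
have dPAQ : disj (P `|` A) Q by fset_solve.
have sy : supp y = P `|` A by apply: supp_comul1.
have dAP : disj A P by fset_solve.
have sx' : supp x = A `|` P `|` Q by rewrite sx (fsetUC P).
have := comul_comul1 dAP dAQ dPQ sx'.
rewrite (fsetUC A) -/y (IH dPA lt).2 // (comul_comul1 dPA dPQ dAQ sx) /=.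
by case.
Qed.

Lemma piece_swap_back : #|` A `|` Q| < n -> piece P A Q x = piece (P `|` Q) A fset0 x.
Proof.
move=> lt; set z := (comul P (A `|` Q) x).2.
have dPAQ : disj P (A `|` Q) by fset_solve.
have sz : supp z = A `|` Q by apply: (supp_comul2 dPAQ); rewrite sx fsetUA.
have dQA : disj Q A by fset_solve.
have sx' : supp x = P `|` Q `|` A by rewrite sx -!fsetUA (fsetUC A).
have := comul_comul2 dPQ dPA dQA sx'.
rewrite (fsetUC Q) -/z (IH dAQ lt).2 //=.
by case.
Qed.

End Pieces.

Lemma piece_res_back P A Q x q : disj P A -> disj P Q -> disj A Q ->
  supp x = P `|` A `|` Q -> #|` supp x| = n -> q \in Q -> piece P A Q x = res A x.
Proof.
move=> dPA dPQ dAQ sx card_sx qQ.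
rewrite piece_swap_front ?piece0 //; try fset_solve.
by rewrite -card_sx; apply: (fcard_lt (c := q)); fset_solve.
Qed.

Lemma piece_res_front P A Q x p p' : disj P A -> disj P Q -> disj A Q ->
  supp x = P `|` A `|` Q -> #|` supp x| = n -> p \in P -> p' \in P -> p != p' ->
  piece P A Q x = res A x.
Proof.
move=> dPA dPQ dAQ sx card_sx pP p'P pp'.
have lt : #|` A `|` Q| < n.
  by rewrite -card_sx; apply: (fcard_lt (c := p)); fset_solve.
rewrite piece_swap_back //.
have -> : P `|` Q = [fset p] `|` ((P `|` Q) `\ p) by fset_solve.
rewrite -(@piece_swap_back [fset p] A ((P `|` Q) `\ p)); try fset_solve.
  by rewrite (piece_res_back (q := p')) //; fset_solve.
by rewrite -card_sx; apply: (fcard_lt (c := p)); fset_solve.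
Qed.

Lemma mul_rearrange p q r w i j k :
  disj (supp p) (supp q) -> disj (supp p) (supp r) -> disj (supp p) (supp w) ->
  disj (supp q) (supp r) -> disj (supp q) (supp w) -> disj (supp r) (supp w) ->
  #|` supp p `|` supp q `|` supp r `|` supp w| = n ->
  i \in supp p -> j \in supp q -> k \in supp r ->
  mul (mul p q) (mul r w) = mul (mul w r) (mul q p).
Proof.
move=> dpq dpr dpw dqr dqw drw card_n ip jq kr.
have sm : supp (mul r w) = supp r `|` supp w by rewrite supp_mul.
have comm y z c : disj (supp y) (supp z) ->
    supp y `|` supp z `<=` supp p `|` supp q `|` supp r `|` supp w ->
    c \in supp p `|` supp q `|` supp r `|` supp w -> c \notin supp y `|` supp z ->
    mul y z = mul z y.
  by move=> dyz sU cU cyz; apply: mulC_lt => //; rewrite -card_n; apply: fcard_lt cyz.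
rewrite (comm w r i) ?(comm q p k); try fset_solve.
rewrite mulA ?(comm q (mul r w) i); try fset_solve.
rewrite -mulA ?(comm p (mul r w) j); try fset_solve.
by rewrite mulA //; fset_solve.
Qed.

Lemma mulcomul_transpose S T a b c x : disj S T -> a \in S -> b \in T ->
  c \in (S `\ a) `|` (T `\ b) -> supp x = S `|` T -> #|` S `|` T| = n ->
  mulcomul (S `\ a `|` [fset b]) (T `\ b `|` [fset a]) (mulcomul S T x)
  = mulcomul (T `\ b `|` [fset a]) (S `\ a `|` [fset b]) (mulcomul T S x).
Proof.
(* Each of the eight pieces below is followed by a nonempty block or preceded by two
   labels, so it is a restriction of x; the two sides then differ by commutations of
   proper products. *)
move=> dST aS bT cST sx card_n.
wlog cS : S T a b dST aS bT cST sx card_n / c \in S => [hyp|].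
  have [cS|cS] := boolP (c \in S); first exact: hyp.
  symmetry; apply: hyp; rewrite 1?fsetUC //; fset_solve.
have card_sx : #|` supp x| = n by rewrite sx.
have lhs := @mulcomul_mulcomul (S `\ a) [fset a] [fset b] (T `\ b) x.
have rhs := @mulcomul_mulcomul (T `\ b) [fset b] [fset a] (S `\ a) x.
have eS : S `\ a `|` [fset a] = S by fset_solve.
have eS' : [fset a] `|` S `\ a = S by fset_solve.
have eT : [fset b] `|` T `\ b = T by fset_solve.
have eT' : T `\ b `|` [fset b] = T by fset_solve.
rewrite eS eT (fsetUC [fset a] (T `\ b)) in lhs.
rewrite eS' eT' (fsetUC [fset b] (S `\ a)) in rhs.
clear eS eS' eT eT'.
rewrite lhs ?rhs; try fset_solve.
rewrite (@piece_res_back fset0 (S `\ a) _ _ a) //; try fset_solve.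
rewrite (@piece_res_front S [fset b] _ _ a c) //; try fset_solve.
rewrite (@piece_res_back (S `\ a) [fset a] _ _ b) //; try fset_solve.
rewrite (@piece_res_front (S `|` [fset b]) _ _ _ a b) //; try fset_solve.
rewrite (@piece_res_back fset0 (T `\ b) _ _ b) //; try fset_solve.
rewrite (@piece_res_back T [fset a] _ _ c) //; try fset_solve.
rewrite (@piece_res_back (T `\ b) [fset b] _ _ a) //; try fset_solve.
rewrite (@piece_res_front (T `|` [fset a]) _ _ _ a b) //; try fset_solve.
have supp_res_x A : A `<=` S `|` T -> supp (res A x) = A by rewrite -sx; apply: supp_res.
apply: (@mul_rearrange _ _ _ _ c b a); rewrite ?supp_res_x; try fset_solve.
suff -> : S `\ a `|` [fset b] `|` [fset a] `|` T `\ b = S `|` T by [].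
fset_solve.
Qed.

End BelowInduction.

Definition transp (a b i : nat) := if i == a then b else if i == b then a else i.

Lemma transpK a b : involutive (transp a b).
Proof. by move=> i; rewrite /transp; fset_cases. Qed.

Lemma transp_inj a b : injective (transp a b).
Proof. exact: can_inj (transpK a b). Qed.

Lemma mem_img_transp a b (S : {fset nat}) i :
  (i \in img (transp a b) S) = (transp a b i \in S).
Proof. by rewrite -{1}(transpK a b i) mem_imfset //; apply: transp_inj. Qed.

Lemma img_transpl a b S : a \in S -> b \notin S -> img (transp a b) S = S `\ a `|` [fset b].
Proof.
move=> aS bS; apply/fsetP => i; rewrite mem_img_transp /transp !inE.
by move: aS bS; fset_cases.
Qed.

Lemma img_transpr a b S : b \in S -> a \notin S -> img (transp a b) S = S `\ b `|` [fset a].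
Proof.
move=> bS aS; apply/fsetP => i; rewrite mem_img_transp /transp !inE.
by move: aS bS; fset_cases.
Qed.

Lemma relab_transpK a b x : relab (transp a b) (relab (transp a b) x) = x.
Proof.
have inj (A : {fset nat}) : {in A &, injective (transp a b)} := in2W (@transp_inj a b).
by rewrite relab_comp // -[RHS]relab_id; apply: eq_relab => i _ /=; rewrite transpK.
Qed.

Definition inflationary (R : X -> X -> Prop) S T :=
  forall x, supp x = S `|` T -> R x (mulcomul S T x).

Section Relation.
Variable R : X -> X -> Prop.
Hypothesis R_anti : forall x y, supp x = supp y -> R x y -> R y x -> x = y.
Hypothesis R_relab : forall s x y, supp x = supp y -> {in supp x &, injective s} ->
  R x y -> R (relab s x) (relab s y).
Hypothesis R_comul : forall S T x x', disj S T -> supp x = S `|` T -> supp x' = S `|` T ->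
  R x x' -> R (comul S T x).1 (comul S T x').1 /\ R (comul S T x).2 (comul S T x').2.

Lemma inflationary_transp a b S T : disj S T -> inflationary R S T ->
  inflationary R (img (transp a b) S) (img (transp a b) T).
Proof.
move=> dST infl y sy.
have inj (A : {fset nat}) : {in A &, injective (transp a b)} := in2W (@transp_inj a b).
have sx : supp (relab (transp a b) y) = S `|` T.
  rewrite supp_relab // sy; apply/fsetP => i.
  by rewrite mem_img_transp !inE !mem_img_transp transpK.
have := R_relab (etrans sx (esym (supp_mulcomul dST sx))) (inj _) (infl _ sx).
by rewrite relab_mulcomul // !relab_transpK.
Qed.

Lemma comm_cocomm_at_inflationary S T : disj S T ->
  inflationary R S T -> inflationary R T S -> comm_cocomm_at S T.
Proof.
move=> dST inflST inflTS; have dTS : disj T S by fset_solve.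
split=> [y z sy sz|x sx].
  have syz : supp (mul y z) = S `|` T by rewrite supp_mul; rewrite ?sy ?sz.
  have szy : supp (mul z y) = S `|` T by rewrite supp_mul; rewrite ?sz ?sy 1?fsetUC.
  apply: R_anti; first by rewrite syz szy.
    by move: (inflTS _ (etrans syz (fsetUC _ _))); rewrite /mulcomul comul_mulC.
  by move: (inflST _ szy); rewrite /mulcomul (comul_mulC dTS).
have sx' : supp x = T `|` S by rewrite sx fsetUC.
have [su sv] := supp_comul dST sx; have [sv' su'] := supp_comul dTS sx'.
have [lev leu] := R_comul dTS sx' (etrans (supp_mulcomul dST sx) (fsetUC _ _)) (inflST _ sx).
have [leu' lev'] := R_comul dST sx (etrans (supp_mulcomul dTS sx') (fsetUC _ _)) (inflTS _ sx').
rewrite /mulcomul comul_mulC // in lev leu; rewrite /mulcomul comul_mulC // in leu' lev'.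
have eu : (comul T S x).2 = (comul S T x).1 by apply: R_anti => //; rewrite su' su.
have ev : (comul T S x).1 = (comul S T x).2 by apply: R_anti => //; rewrite sv' sv.
by rewrite [LHS]surjective_pairing eu ev.
Qed.

End Relation.

Section SelfAdjointForward.
Variable le : X -> X -> Prop.
Hypothesis le_refl : forall x, le x x.
Hypothesis le_anti : forall x y, supp x = supp y -> le x y -> le y x -> x = y.
Hypothesis le_trans : forall x y z, supp x = supp y -> supp y = supp z ->
  le x y -> le y z -> le x z.
Hypothesis le_relab : forall s x y, supp x = supp y -> {in supp x &, injective s} ->
  le x y -> le (relab s x) (relab s y).
Hypothesis le_comul : forall S T x x', disj S T -> supp x = S `|` T -> supp x' = S `|` T ->
  le x x' -> le (comul S T x).1 (comul S T x').1 /\ le (comul S T x).2 (comul S T x').2.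
Hypothesis le_galois : forall S T, disj S T ->
  (forall x y z, supp x = S `|` T -> supp y = S -> supp z = T ->
     (le (comul S T x).1 y /\ le (comul S T x).2 z <-> le x (mul y z)))
  \/
  (forall x y z, supp x = S `|` T -> supp y = S -> supp z = T ->
     (le (mul y z) x <-> le y (comul S T x).1 /\ le z (comul S T x).2)).

Local Notation ge := (fun x y : X => le y x).

Let ge_relab s x y : supp x = supp y -> {in supp x &, injective s} ->
  ge x y -> ge (relab s x) (relab s y).
Proof. by move=> sxy inj; apply: le_relab; rewrite // -sxy. Qed.

Lemma inflationary_galois S T : disj S T -> inflationary le S T \/ inflationary ge S T.
Proof.
move=> dST; case: (le_galois dST) => adj; [left|right] => x sx;
  have [s1 s2] := supp_comul dST sx.
  by apply/(adj x _ _ sx s1 s2).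
by apply/(adj x _ _ sx s1 s2).
Qed.

Lemma comm_cocomm_at_mixed n S T a b : comm_cocomm_below n -> disj S T ->
  a \in S -> b \in T -> #|` S `|` T| = n ->
  inflationary le S T -> inflationary ge T S -> comm_cocomm_at S T.
Proof.
move=> IH dST aS bT card_n up down; have dTS : disj T S by fset_solve.
have up' := inflationary_transp le_relab (a := a) (b := b) dST up.
have down' := inflationary_transp ge_relab (a := a) (b := b) dTS down.
have bS : b \notin S by fset_solve.
have aT : a \notin T by fset_solve.
rewrite (@img_transpl a b S) ?(@img_transpr a b T) // in up' down'.
apply: comm_cocomm_at_fixed => // x sx.
have sxTS : supp x = T `|` S by rewrite sx fsetUC.
have sy : supp (mulcomul S T x) = S `|` T := supp_mulcomul dST sx.
have [noc|/fset0Pn [c cST]] := eqVneq ((S `\ a) `|` (T `\ b)) fset0.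
  have eT : T `\ b `|` [fset a] = S by fset_solve.
  have eS : S `\ a `|` [fset b] = T by fset_solve.
  rewrite eT eS in down'.
  by apply: (le_anti _ (down' x sx) (up x sx)); rewrite sy.
have sz : supp (mulcomul T S x) = S `|` T by rewrite supp_mulcomul // fsetUC.
have eU : S `|` T = (S `\ a `|` [fset b]) `|` (T `\ b `|` [fset a]) by fset_solve.
have eU' : S `|` T = (T `\ b `|` [fset a]) `|` (S `\ a `|` [fset b]) by fset_solve.
(* x <= mD_{S,T} x <= mD_{S',T'} mD_{S,T} x = mD_{T',S'} mD_{T,S} x <= mD_{T,S} x <= x *)
have up_y := up' _ (etrans sy eU).
have down_z := down' _ (etrans sz eU').
rewrite (mulcomul_transpose IH dST aS bT cST sx card_n) in up_y.
have sw : supp (mulcomul (T `\ b `|` [fset a]) (S `\ a `|` [fset b]) (mulcomul T S x))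
    = S `|` T by rewrite eU' supp_mulcomul -?eU' //; fset_solve.
apply: (le_anti _ _ (up x sx)); first by rewrite sy.
apply: (le_trans _ _ up_y); rewrite ?sy ?sw //.
by apply: (le_trans _ _ down_z (down x sxTS)); rewrite ?sw ?sz.
Qed.

Lemma comm_cocomm_at_card n S T : comm_cocomm_below n -> disj S T ->
  #|` S `|` T| = n -> comm_cocomm_at S T.
Proof.
move=> IH dST card_n.
have [->|/fset0Pn [a aS]] := eqVneq S fset0; first exact: comm_cocomm_at0.
have [->|/fset0Pn [b bT]] := eqVneq T fset0; first exact/comm_cocomm_atC/comm_cocomm_at0.
have dTS : disj T S by fset_solve.
have ge_anti x y : supp x = supp y -> ge x y -> ge y x -> x = y.
  by move=> sxy lexy leyx; apply: le_anti.
have ge_comul S' T' x x' : disj S' T' -> supp x = S' `|` T' -> supp x' = S' `|` T' ->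
    ge x x' -> ge (comul S' T' x).1 (comul S' T' x').1 /\ ge (comul S' T' x).2 (comul S' T' x').2.
  by move=> dST' sx sx' lex; apply: le_comul.
case: (inflationary_galois dST) => [upST|downST];
  case: (inflationary_galois dTS) => [upTS|downTS].
- exact: comm_cocomm_at_inflationary le_anti le_comul _ _ dST upST upTS.
- exact: comm_cocomm_at_mixed IH dST aS bT card_n upST downTS.
- by apply/comm_cocomm_atC/(comm_cocomm_at_mixed IH dTS bT aS); rewrite // fsetUC.
- exact: comm_cocomm_at_inflationary ge_anti ge_comul _ _ dST downST downTS.
Qed.

Lemma comm_cocomm_below_all n : comm_cocomm_below n.
Proof.
elim: n => [//|n IH] S T dST.
rewrite ltnS leq_eqVlt => /orP [/eqP card_n|lt]; last exact: IH.
exact: comm_cocomm_at_card IH dST card_n.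
Qed.

Lemma self_adjoint_comm_cocomm :
  commutative_hm supp mul /\ cocommutative_hm supp comul.
Proof.
have all S T : disj S T -> comm_cocomm_at S T.
  by move=> dST; apply: (@comm_cocomm_below_all _ _ _ dST (ltnSn _)).
split=> [x y dxy|S T x dST]; first exact: (all _ _ dxy).1.
exact: (all _ _ dST).2.
Qed.

End SelfAdjointForward.

Section CommCocommBackward.
Hypothesis mulC : commutative_hm supp mul.
Hypothesis comulC : cocommutative_hm supp comul.

Lemma comul_res S T x : disj S T -> supp x = S `|` T -> comul S T x = (res S x, res T x).
Proof.
move=> dST sx; rewrite /res.
have -> : supp x `\` S = T by rewrite sx; fset_solve.
have -> : supp x `\` T = S by rewrite sx; fset_solve.
by rewrite (comulC dST sx) -surjective_pairing.
Qed.

Lemma mulcomul_res S T x : disj S T -> supp x = S `|` T ->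
  mulcomul S T x = mul (res S x) (res T x).
Proof. by move=> dST sx; rewrite /mulcomul comul_res. Qed.

Lemma res_mul A x y : disj (supp x) (supp y) -> A `<=` supp x `|` supp y ->
  res A (mul x y) = mul (res (supp x `&` A) x) (res (supp y `&` A) y).
Proof.
move=> dxy sA; set B := (supp x `|` supp y) `\` A.
have dAB : disj A B by rewrite /B; fset_solve.
have eU : supp x `|` supp y = A `|` B by rewrite /B; fset_solve.
rewrite /res supp_mul // -/B (compat dxy dAB eU erefl erefl) /=.
by rewrite comul_res ?(comul_res (x := y)) //; rewrite /B; fset_solve.
Qed.

Lemma res_mulcomul A S T x : disj S T -> supp x = S `|` T -> A `<=` S `|` T ->
  res A (mulcomul S T x) = mul (res (S `&` A) x) (res (T `&` A) x).
Proof.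
move=> dST sx sA; have sSx : S `<=` supp x by rewrite sx; fset_solve.
have sTx : T `<=` supp x by rewrite sx; fset_solve.
rewrite mulcomul_res // res_mul ?(supp_res sSx) ?(supp_res sTx) // !res_res //;
  fset_solve.
Qed.

Lemma res_full x : res (supp x) x = x.
Proof. by rewrite /res fsetDv comul0r. Qed.

Lemma res0 x : res fset0 x = one.
Proof. by apply: supp0_one; apply: supp_res; fset_solve. Qed.

Lemma mulACA_disj y1 y2 y3 y4 :
  disj (supp y1) (supp y2) -> disj (supp y1) (supp y3) -> disj (supp y1) (supp y4) ->
  disj (supp y2) (supp y3) -> disj (supp y2) (supp y4) -> disj (supp y3) (supp y4) ->
  mul (mul y1 y2) (mul y3 y4) = mul (mul y1 y3) (mul y2 y4).
Proof.
move=> d12 d13 d14 d23 d24 d34.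
have s34 : supp (mul y3 y4) = supp y3 `|` supp y4 by rewrite supp_mul.
have s24 : supp (mul y2 y4) = supp y2 `|` supp y4 by rewrite supp_mul.
rewrite mulA -?(mulA d23) ?(mulC d23) ?mulA //; fset_solve.
Qed.

Lemma mulAC_disj y1 y2 y3 :
  disj (supp y1) (supp y2) -> disj (supp y1) (supp y3) -> disj (supp y2) (supp y3) ->
  mul (mul y1 y2) y3 = mul (mul y1 y3) y2.
Proof. by move=> d12 d13 d23; rewrite !mulA ?(mulC d23) //; fset_solve. Qed.

Lemma mulcomul_fixed U V S T x : disj U V -> disj S T -> supp x = U `|` V ->
  supp x = S `|` T -> mulcomul U V x = x ->
  mulcomul U V (mulcomul S T x) = mulcomul S T x.
Proof.
move=> dUV dST sxUV sxST fixed.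
have sy : supp (mulcomul S T x) = U `|` V by rewrite supp_mulcomul // -sxST.
have rS : res S x = mul (res (U `&` S) x) (res (V `&` S) x).
  by rewrite -{1}fixed res_mulcomul //; fset_solve.
have rT : res T x = mul (res (U `&` T) x) (res (V `&` T) x).
  by rewrite -{1}fixed res_mulcomul //; fset_solve.
rewrite (mulcomul_res dUV sy) !res_mulcomul //; try fset_solve.
rewrite (mulcomul_res dST sxST) rS rT (fsetIC U S) (fsetIC V S) (fsetIC U T) (fsetIC V T).
by apply: mulACA_disj; rewrite ?supp_res; fset_solve.
Qed.

Definition mulcomul_step x y :=
  exists S T, [/\ disj S T, supp x = S `|` T & y = mulcomul S T x].

Definition mulcomul_le := clos_refl_trans_1n X mulcomul_step.

Lemma supp_mulcomul_step x y : mulcomul_step x y -> supp y = supp x.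
Proof. by case=> S [T [dST sx ->]]; rewrite supp_mulcomul. Qed.

Lemma supp_mulcomul_le x y : mulcomul_le x y -> supp y = supp x.
Proof. by elim=> // u v w /supp_mulcomul_step svu _ ->. Qed.

Lemma mulcomul_le_trans x y z : mulcomul_le x y -> mulcomul_le y z -> mulcomul_le x z.
Proof.
move=> lexy leyz; apply: clos_rt_rt1n.
by apply: (rt_trans _ _ _ y); apply: clos_rt1n_rt.
Qed.

Lemma mulcomul_le_map (f : X -> X) (P : {fset nat} -> Prop) :
  (forall x y, mulcomul_step x y -> P (supp x) -> mulcomul_step (f x) (f y)) ->
  forall x y, mulcomul_le x y -> P (supp x) -> mulcomul_le (f x) (f y).
Proof.
move=> fstep x y; elim=> [u _|u v w suv _ IH Pu]; first exact: rt1n_refl.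
apply: Relation_Operators.rt1n_trans (fstep _ _ suv Pu) (IH _).
by rewrite (supp_mulcomul_step suv).
Qed.

Lemma mulcomul_le_fixed U V x y : disj U V -> supp x = U `|` V -> mulcomul_le x y ->
  mulcomul U V x = x -> mulcomul U V y = y.
Proof.
move=> dUV + lexy; elim: lexy => // u v w [S [T [dST su ->]]] _ IH suUV fixed.
apply: IH; last exact: mulcomul_fixed.
by rewrite supp_mulcomul // -su.
Qed.

Lemma mulcomul_le_anti x y : mulcomul_le x y -> mulcomul_le y x -> x = y.
Proof.
elim=> // u v w [S [T [dST su ev]]] levw IH lewu.
have sv : supp v = S `|` T by rewrite ev supp_mulcomul.
have fixed_u : mulcomul S T u = u.
  by apply: (mulcomul_le_fixed dST sv (mulcomul_le_trans levw lewu)); rewrite ev mulcomulK.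
have euv : u = v by rewrite ev fixed_u.
by rewrite euv; apply: IH; rewrite -euv.
Qed.

Lemma img_disj s S T : disj S T -> {in S `|` T &, injective s} -> disj (img s S) (img s T).
Proof.
move=> dST inj; apply/disj_memI => i; apply/negbTE/negP.
case/andP => /imfsetP [j jS ->] /imfsetP [k kT e].
have jk : j = k by apply: inj => //; rewrite inE ?jS ?kT ?orbT.
by move: (disj_mem j dST); rewrite jS jk kT.
Qed.

Lemma mulcomul_step_relab s x y : {in supp x &, injective s} ->
  mulcomul_step x y -> mulcomul_step (relab s x) (relab s y).
Proof.
move=> inj [S [T [dST sx ->]]]; rewrite sx in inj.
exists (img s S), (img s T); split; first exact: img_disj.
  by rewrite supp_relab ?sx // /img imfsetU.
by rewrite relab_mulcomul.
Qed.

Lemma mulcomul_step_mull x x' y : disj (supp x) (supp y) ->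
  mulcomul_step x x' -> mulcomul_step (mul x y) (mul x' y).
Proof.
move=> dxy [S [T [dST sx ->]]].
have dSyT : disj (S `|` supp y) T by rewrite sx in dxy; fset_solve.
have sxy : supp (mul x y) = (S `|` supp y) `|` T by rewrite supp_mul // sx; fset_solve.
exists (S `|` supp y), T; split => //.
have sSx : S `<=` supp x by rewrite sx; fset_solve.
have sTx : T `<=` supp x by rewrite sx; fset_solve.
rewrite (mulcomul_res dST sx) (mulcomul_res dSyT sxy) !res_mul //; try fset_solve.
have -> : supp x `&` (S `|` supp y) = S by fset_solve.
have -> : supp y `&` (S `|` supp y) = supp y by fset_solve.
have -> : supp x `&` T = T by fset_solve.
have -> : supp y `&` T = fset0 by fset_solve.
by rewrite res_full res0 mulm1 mulAC_disj // ?supp_res //; fset_solve.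
Qed.

Lemma mulcomul_step_res A x x' : A `<=` supp x ->
  mulcomul_step x x' -> mulcomul_step (res A x) (res A x').
Proof.
move=> sA [U [V [dUV sx ->]]]; have sAx := supp_res sA.
exists (U `&` A), (V `&` A); split; rewrite ?sAx; try fset_solve.
rewrite res_mulcomul -?sx // mulcomul_res ?sAx ?res_res //; fset_solve.
Qed.

Lemma mulcomul_le_mul x x' y y' : disj (supp x) (supp y) ->
  mulcomul_le x x' -> mulcomul_le y y' -> mulcomul_le (mul x y) (mul x' y').
Proof.
move=> dxy lex ley; have sx' := supp_mulcomul_le lex; have sy' := supp_mulcomul_le ley.
have step_mulr z : forall u v, mulcomul_step u v -> disj (supp u) (supp z) ->
    mulcomul_step (mul u z) (mul v z).
  by move=> u v suv duz; apply: mulcomul_step_mull.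
apply: (@mulcomul_le_trans _ (mul x' y)).
  exact: (mulcomul_le_map (f := mul^~ y) (P := disj^~ (supp y)) (step_mulr y)).
have dx'y : disj (supp x') (supp y) by rewrite sx'.
have dx'y' : disj (supp x') (supp y') by rewrite sx' sy'.
rewrite (mulC dx'y) (mulC dx'y').
by apply: (mulcomul_le_map (f := mul^~ x') (P := disj^~ (supp x')) (step_mulr x')) => //;
  fset_solve.
Qed.

Lemma mulcomul_le_comul S T x x' : disj S T -> supp x = S `|` T -> mulcomul_le x x' ->
  mulcomul_le (comul S T x).1 (comul S T x').1 /\ mulcomul_le (comul S T x).2 (comul S T x').2.
Proof.
move=> dST sx lex; have sx' : supp x' = S `|` T by rewrite (supp_mulcomul_le lex).
have le_res A : A `<=` S `|` T -> mulcomul_le (res A x) (res A x').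
  move=> sA; apply: (mulcomul_le_map (f := res A) (P := fsubset A)) lex _; last by rewrite sx.
  by move=> u v suv sAu; apply: mulcomul_step_res.
by rewrite !comul_res //; split; apply: le_res; fset_solve.
Qed.

Lemma comm_cocomm_self_adjoint : self_adjoint_wrt supp mul comul relab mulcomul_le.
Proof.
split; first exact: rt1n_refl.
split; first by move=> x y _; apply: mulcomul_le_anti.
split; first by move=> x y z _ _; apply: mulcomul_le_trans.
split.
  move=> s x y _ inj lexy.
  apply: (mulcomul_le_map (f := relab s) (P := fun A => {in A &, injective s})) lexy inj.
  by move=> u v suv inju; apply: mulcomul_step_relab.
split; first by move=> x x' y y' dxy _ _; apply: mulcomul_le_mul.
split; first by move=> S T x x' dST sx _; apply: mulcomul_le_comul.
move=> S T dST; left=> x y z sx sy sz; split=> [[le1 le2]|lex].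
  apply: mulcomul_le_trans (mulcomul_le_mul _ le1 le2).
    by apply: clos_rt1n_step; exists S, T.
  by rewrite (supp_comul1 dST sx) (supp_comul2 dST sx).
by have := mulcomul_le_comul dST sx lex; rewrite comul_mul.
Qed.

End CommCocommBackward.

End SetHopfMonoid.

Theorem mainTheorem11 (X : Type) (supp : X -> {fset nat}) (one : X)
  (mul : X -> X -> X) (comul : {fset nat} -> {fset nat} -> X -> X * X)
  (relab : (nat -> nat) -> X -> X) :
  is_connected_set_hopf_monoid supp one mul comul relab ->
  (self_adjoint_some_poset supp mul comul relab <->
   commutative_hm supp mul /\ cocommutative_hm supp comul).
Proof.
move=> [[_ [_ [?[?[?[??]]]]]] [[?[?[??]]] [[?[?[??]]] ?]]].
split=> [[le [? [? [? [? [_ [??]]]]]]]|[??]].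
  by eapply self_adjoint_comm_cocomm; eassumption.
by exists (mulcomul_le supp mul comul); eapply comm_cocomm_self_adjoint; eassumption.
Qed.
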